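(* As $N\to\infty$, $$\mathbf{P}_o\Big[\Big\{\tfrac{Sn}{N^d}<(\sqrt{\log\log n})^{-1}\Big\}\cup\Big\{\tfrac{Sn}{N^d}>\log N\Big\}\Big]\to0.$$
   Context: $d\ge3$. $(Y_t)$ is the lazy simple random walk on $\mathbb{Z}^d$ (stays put with probability $1/2$, otherwise moves to each neighbour with probability $1/(4d)$), $\mathbf{P}_o$ its law started at the origin. $L=mN$ with $m=m(N)$, $N$ integers, $L^2/N^d\to A\in(0,\infty)$ as $N\to\infty$. $n=\lfloor N^\delta\rfloor$ for a fixed $2<\delta<d$. $S=\inf\{\ell\ge0:Y_{n\ell}\notin(-L,L)^d\}$. *)

From HB Require Import structures.
From mathcomp Require Import all_boot all_order all_algebra.
From mathcomp Require Import all_classical all_reals all_analysis.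
Set Implicit Arguments. Unset Strict Implicit. Unset Printing Implicit Defensive.
Import Order.TTheory GRing.Theory Num.Theory.
Local Open Scope ring_scope.

(* One step of the lazy simple random walk on Z^d:
   None = stay put; Some (i, b) = move by +e_i (b = true) or -e_i (b = false). *)
Definition step (d : nat) := option ('I_d * bool).

Definition move (d : nat) (s : step d) : 'rV[int]_d :=
  match s with
  | None => 0
  | Some (i, b) => if b then delta_mx 0 i else - delta_mx 0 i
  end.

Definition stepw (R : realType) (d : nat) (s : step d) : R :=
  if s is None then 2^-1 else ((4 * d)%:R)^-1.

Definition walk_pos (d T : nat) (s : {ffun 'I_T -> step d}) (t : nat) : 'rV[int]_d :=
  \sum_(k < T | (k < t)%N) move (s k).

(* P_o of an event depending only on the first T steps of the walk:
   the law of (Y_0, ..., Y_T) is the product of the step weights. *)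
Definition walk_prob (R : realType) (d T : nat)
    (E : pred {ffun 'I_T -> step d}) : R :=
  \sum_(s : {ffun 'I_T -> step d}) (\prod_(k < T) stepw R (s k)) * (E s)%:R.

Definition in_box (d L : nat) (y : 'rV[int]_d) : bool :=
  [forall i : 'I_d, (- (L%:Z) < y 0 i) && (y 0 i < L%:Z)].

(* S = inf {l >= 0 : Y_{n l} notin (-L,L)^d}, computed from the first n*K steps;
   value K.+1 means S > K. *)
Definition exit_time (d n K L : nat) (s : {ffun 'I_(n * K.+1) -> step d}) : nat :=
  find (fun l => ~~ in_box L (walk_pos s (n * l))) (iota 0 K.+1).

Definition nN (R : realType) (delta : R) (N : nat) : nat := Num.truncn ((N%:R : R) `^ delta).

(* horizon K (in units of n), large enough that both events are determined *)
Definition horizon (R : realType) (d : nat) (delta : R) (N : nat) : nat :=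
  let n := nN delta N in
  (Num.truncn ((N%:R : R) ^+ d * (ln (N%:R : R) + (Num.sqrt (ln (ln (n%:R : R))))^-1)
               / n%:R)).+1.

Definition main_prob (R : realType) (d : nat) (delta : R) (m : nat -> nat) (N : nat) : R :=
  let n := nN delta N in
  let K := horizon d delta N in
  let L := (m N * N)%N in
  walk_prob R
    (fun s : {ffun 'I_(n * K.+1) -> step d} =>
       let x := ((@exit_time d n K L s * n)%:R : R) / (N%:R : R) ^+ d in
       (x < (Num.sqrt (ln (ln (n%:R : R))))^-1) || (ln (N%:R : R) < x)).

From HB Require Import structures.
From mathcomp Require Import all_boot all_order all_algebra.
From mathcomp Require Import all_classical all_reals all_analysis.
From mathcomp Require Import ring lra.
Import Order.TTheory GRing.Theory Num.Theory.
Import numFieldNormedType.Exports.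
Set Implicit Arguments. Unset Strict Implicit. Unset Printing Implicit Defensive.
Local Open Scope ring_scope.

(* Let eps = (log log n)^(-1/2) and L = m N, so that L^2 is about A N^d.
   If S n < eps N^d, the walk leaves the box (-L, L)^d before time eps N^d, hence one of its
   d coordinates reaches distance L by then.  Each coordinate is a sum of centred steps of
   variance 1/(2d), so Kolmogorov's maximal inequality bounds this probability by
   eps N^d / (2 L^2), which is about eps / A.
   If S n > N^d log N, the walk is in the box at the ends of about log N / C blocks (C a constant)
   of B >= 32 d L^2 steps, so every block increment of the first coordinate lies in (-2L, 2L).
   By a fourth-moment (Paley-Zygmund) estimate this has probability at most 7/8 for each block,
   independently of the past, which gives the bound (7/8)^(log N / C).  Both bounds tend to 0. *)

Section SeqExpectation.
Variables (R : realFieldType) (X : finType) (w : X -> R).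

Fixpoint expect_seq (T : nat) (f : seq X -> R) : R :=
  if T is T'.+1 then \sum_x w x * expect_seq T' (fun l => f (x :: l)) else f [::].

Lemma eq_expect_seq T (f g : seq X -> R) :
  (forall l, size l = T -> f l = g l) -> expect_seq T f = expect_seq T g.
Proof.
elim: T f g => [|T IH] f g fg /=; first exact: fg.
by apply: eq_bigr => x _; congr (_ * _); apply: IH => l sl; apply: fg; rewrite /= sl.
Qed.

Lemma expect_seqD T (f g : seq X -> R) :
  expect_seq T (fun l => f l + g l) = expect_seq T f + expect_seq T g.
Proof.
elim: T f g => [|T IH] f g //=.
by rewrite -big_split; apply: eq_bigr => x _; rewrite IH mulrDr.
Qed.

Lemma expect_seqZ T (k : R) (f : seq X -> R) :
  expect_seq T (fun l => k * f l) = k * expect_seq T f.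
Proof.
elim: T f => [|T IH] f //=.
by rewrite mulr_sumr; apply: eq_bigr => x _; rewrite IH mulrCA.
Qed.

Lemma expect_seq_cat T1 T2 (f : seq X -> R) :
  expect_seq (T1 + T2) f = expect_seq T1 (fun l1 => expect_seq T2 (fun l2 => f (l1 ++ l2))).
Proof. by elim: T1 f => [|T1 IH] f //=; apply: eq_bigr => x _; rewrite IH. Qed.

Lemma expect_seq_rcons T (f : seq X -> R) :
  expect_seq T.+1 f = expect_seq T (fun l => \sum_x w x * f (rcons l x)).
Proof.
rewrite -addn1 expect_seq_cat; apply: eq_expect_seq => l _ /=.
by apply: eq_bigr => x _; rewrite cats1.
Qed.

Lemma expect_seq_sum (I : finType) T (F : I -> seq X -> R) :
  expect_seq T (fun l => \sum_i F i l) = \sum_i expect_seq T (F i).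
Proof.
elim: T F => [|T IH] F //=; rewrite exchange_big; apply: eq_bigr => x _.
by rewrite IH mulr_sumr.
Qed.

Definition ffun_of_seq (x0 : X) T (l : seq X) : {ffun 'I_T -> X} :=
  [ffun k : 'I_T => nth x0 l k].

Lemma sum_ffun_expect_seq (x0 : X) T (F : {ffun 'I_T -> X} -> R) :
  \sum_(s : {ffun 'I_T -> X}) (\prod_(k < T) w (s k)) * F s
  = expect_seq T (fun l => F (ffun_of_seq x0 T l)).
Proof.
elim: T F => [|T IH] F /=.
  rewrite (big_pred1 (ffun_of_seq x0 0 [::])) ?big_ord0 ?mul1r // => s.
  by symmetry; apply/eqP/ffunP => -[].
pose cons_ffun (p : X * {ffun 'I_T -> X}) : {ffun 'I_T.+1 -> X} :=
  [ffun i => if unlift ord0 i is Some j then p.2 j else p.1].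
have cons_bij : bijective cons_ffun.
  exists (fun s : {ffun 'I_T.+1 -> X} => (s ord0, [ffun j : 'I_T => s (lift ord0 j)])).
    move=> [x s] /=; congr (_, _); first by rewrite ffunE unlift_none.
    by apply/ffunP => j; rewrite !ffunE liftK.
  move=> s; apply/ffunP => i; rewrite ffunE /=.
  by case: unliftP => [j ->|->]; rewrite ?ffunE.
rewrite (reindex cons_ffun) /=; last exact: onW_bij.
transitivity (\sum_x \sum_(s : {ffun 'I_T -> X})
                w x * ((\prod_(k < T) w (s k)) * F (cons_ffun (x, s)))).
  rewrite pair_bigA; apply: eq_bigr => -[x s] _ /=.
  rewrite big_ord_recl /cons_ffun ffunE unlift_none mulrA /=.
  by under eq_bigr => k _ do rewrite ffunE liftK.
apply: eq_bigr => x _; rewrite -mulr_sumr IH; congr (_ * _).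
apply: eq_expect_seq => l _; congr (F _); apply/ffunP => i; rewrite !ffunE.
by case: unliftP => [j ->|->] //=; rewrite ffunE.
Qed.

Definition psum (c : X -> R) (l : seq X) (t : nat) : R := \sum_(x <- take t l) c x.

Lemma psum0 c l : psum c l 0 = 0.
Proof. by rewrite /psum take0 big_nil. Qed.

Lemma psum_size c l : psum c l (size l) = \sum_(x <- l) c x.
Proof. by rewrite /psum take_size. Qed.

Lemma psum_take c l T0 t : (t <= T0)%N -> psum c (take T0 l) t = psum c l t.
Proof. by move=> tT0; rewrite /psum take_takel. Qed.

Lemma psum_catl c l1 l2 t : (t <= size l1)%N -> psum c (l1 ++ l2) t = psum c l1 t.
Proof.
move=> tl1; rewrite /psum take_cat; case: ltnP => // l1t.
have -> : t = size l1 by apply/eqP; rewrite eqn_leq tl1.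
by rewrite subnn take0 cats0 take_size.
Qed.

Lemma psum_cat c l1 l2 t :
  psum c (l1 ++ l2) (size l1 + t) = \sum_(x <- l1) c x + psum c l2 t.
Proof. by rewrite /psum take_cat ltnNge leq_addr /= addKn big_cat. Qed.

Section ProbabilityWeights.
Hypotheses (w_ge0 : forall x, 0 <= w x) (w_sum1 : \sum_x w x = 1).

Lemma ler_expect_seq T (f g : seq X -> R) :
  (forall l, size l = T -> f l <= g l) -> expect_seq T f <= expect_seq T g.
Proof.
elim: T f g => [|T IH] f g fg /=; first exact: fg.
apply: ler_sum => x _; apply: ler_wpM2l => //.
by apply: IH => l sl; apply: fg; rewrite /= sl.
Qed.

Lemma expect_seq_cst T (k : R) : expect_seq T (fun _ => k) = k.
Proof.
elim: T => [|T IH] //=.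
by under eq_bigr => x _ do rewrite IH; rewrite -mulr_suml w_sum1 mul1r.
Qed.

Lemma expect_seq_take T T0 (f : seq X -> R) : (T0 <= T)%N ->
  expect_seq T (fun l => f (take T0 l)) = expect_seq T0 f.
Proof.
move=> T0T; rewrite -(subnKC T0T) expect_seq_cat; apply: eq_expect_seq => l1 sl1.
rewrite -[RHS](expect_seq_cst (T - T0)); apply: eq_expect_seq => l2 _.
by rewrite take_size_cat.
Qed.

End ProbabilityWeights.
End SeqExpectation.

Section CentredSums.
Variables (R : realFieldType) (X : finType) (w : X -> R) (c : X -> R).
Hypotheses (w_ge0 : forall x, 0 <= w x) (w_sum1 : \sum_x w x = 1).
Hypothesis c_mean0 : \sum_x w x * c x = 0.
Hypothesis c_le1 : forall x, `|c x| <= 1.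

Let q := \sum_x w x * c x ^+ 2.

Let q_ge0 : 0 <= q.
Proof. by apply: sumr_ge0 => x _; rewrite mulr_ge0 ?sqr_ge0. Qed.

Lemma sum_sqr_shift (y : R) : \sum_x w x * (y + c x) ^+ 2 = y ^+ 2 + q.
Proof.
rewrite (eq_bigr (fun x => y ^+ 2 * w x + 2 * y * (w x * c x) + w x * c x ^+ 2));
  last by move=> x _; ring.
by rewrite !big_split /= -!mulr_sumr w_sum1 c_mean0 mulr1 mulr0 addr0.
Qed.

Lemma expect_seq_sum_cons T (F : R -> R) :
  expect_seq w T.+1 (fun l => F (\sum_(x <- l) c x))
  = \sum_x w x * expect_seq w T (fun l => F (c x + \sum_(y <- l) c y)).
Proof.
apply: eq_bigr => x _; congr (_ * _).
by apply: eq_expect_seq => l _; rewrite big_cons.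
Qed.

Lemma expect_sum T : expect_seq w T (fun l => \sum_(x <- l) c x) = 0.
Proof.
elim: T => [|T IH]; first by rewrite /= big_nil.
rewrite (expect_seq_sum_cons T id).
under eq_bigr => x _ do rewrite expect_seqD expect_seq_cst // IH addr0.
exact: c_mean0.
Qed.

Lemma expect_sum_sqr T : expect_seq w T (fun l => (\sum_(x <- l) c x) ^+ 2) = T%:R * q.
Proof.
elim: T => [|T IH]; first by rewrite /= big_nil expr0n mul0r.
rewrite (expect_seq_sum_cons T (fun y => y ^+ 2)).
transitivity (\sum_x (w x * c x ^+ 2 + T%:R * q * w x)).
  apply: eq_bigr => x _.
  rewrite (eq_expect_seq w (g := fun l => c x ^+ 2 + (2 * c x * \sum_(y <- l) c y
                                          + (\sum_(y <- l) c y) ^+ 2)));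
    last by move=> l _; ring.
  rewrite !expect_seqD expect_seq_cst // expect_seqZ expect_sum IH; ring.
by rewrite big_split /= -mulr_sumr w_sum1 -/q -natr1; ring.
Qed.

Lemma expect_sum_pow4_le T :
  expect_seq w T (fun l => (\sum_(x <- l) c x) ^+ 4) <= T%:R * q + 3 * (T%:R * q) ^+ 2.
Proof.
elim: T => [|T IH]; first by rewrite /= big_nil expr0n mul0r expr0n mulr0 addr0.
rewrite (expect_seq_sum_cons T (fun y => y ^+ 4)).
set E3 := expect_seq w T (fun l => (\sum_(y <- l) c y) ^+ 3).
set E4 := expect_seq w T (fun l => (\sum_(y <- l) c y) ^+ 4) in IH *.
have shift4 x : expect_seq w T (fun l => (c x + \sum_(y <- l) c y) ^+ 4)
    = c x ^+ 4 + 6 * (T%:R * q) * c x ^+ 2 + 4 * E3 * c x + E4.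
  rewrite (eq_expect_seq w (g := fun l => c x ^+ 4 + (4 * c x ^+ 3 * \sum_(y <- l) c y
     + (6 * c x ^+ 2 * (\sum_(y <- l) c y) ^+ 2 + (4 * c x * (\sum_(y <- l) c y) ^+ 3
     + (\sum_(y <- l) c y) ^+ 4)))));
    last by move=> l _; ring.
  rewrite !expect_seqD expect_seq_cst // !expect_seqZ expect_sum expect_sum_sqr -/E3 -/E4.
  ring.
under eq_bigr => x _ do rewrite shift4.
rewrite (eq_bigr (fun x => w x * c x ^+ 4 + 6 * (T%:R * q) * (w x * c x ^+ 2)
                           + 4 * E3 * (w x * c x) + E4 * w x)); last by move=> x _; ring.
rewrite !big_split /= -!mulr_sumr -/q c_mean0 w_sum1 mulr0 addr0 mulr1.
have c4 : \sum_x w x * c x ^+ 4 <= q.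
  apply: ler_sum => x _; apply: ler_wpM2l => //.
  have := c_le1 x; rewrite ler_norml => /andP[? ?].
  have : c x ^+ 2 <= 1 by nra.
  have := sqr_ge0 (c x); nra.
rewrite -natr1; nra.
Qed.

Lemma prob_small_sum_le B (L : R) : 0 <= L ->
  16 * L ^+ 2 <= B%:R * q -> 1 <= B%:R * q ->
  expect_seq w B (fun l => ((`|\sum_(x <- l) c x| < 2 * L)%R)%:R) <= 7 / 8.
Proof.
move=> L_ge0 hL hs; set s := B%:R * q in hL hs.
set P := expect_seq w B _.
(* Pointwise 8 s X^2 <= 32 s L^2 + 16 s^2 + X^4 - 16 s^2 1{|X| < 2L}; then use
   E X^2 = s and E X^4 <= s + 3 s^2. *)
have key : expect_seq w B (fun l => 8 * s * (\sum_(x <- l) c x) ^+ 2) <=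
    expect_seq w B (fun l => (32 * s * L ^+ 2 + 16 * s ^+ 2) +
      ((\sum_(x <- l) c x) ^+ 4 + (- (16 * s ^+ 2)) * ((`|\sum_(x <- l) c x| < 2 * L)%R)%:R)).
  apply: (ler_expect_seq w_ge0) => l _; set y := \sum_(x <- l) c x.
  have := sqr_ge0 (y ^+ 2 - 4 * s); have := sqr_ge0 L; have := sqr_ge0 (y ^+ 2).
  case: (boolP (`|y| < 2 * L)) => /= hy; last by rewrite mulr0 addr0; nra.
  move: hy; rewrite ltr_norml => /andP[? ?].
  have : y ^+ 2 <= 4 * L ^+ 2 by nra.
  nra.
rewrite expect_seqZ expect_sum_sqr !expect_seqD !expect_seqZ !expect_seq_cst // -/s -/P in key.
have := expect_sum_pow4_le B; rewrite -/s.
have : 32 * s * L ^+ 2 <= 2 * s ^+ 2 by nra.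
have : 0 < s ^+ 2 by nra.
nra.
Qed.

Definition within_at (L : R) (B J : nat) (l : seq X) : bool :=
  all (fun j => `|psum c l (j * B)| < L) (iota 0 J.+1).

Lemma within_atS (L : R) B J (l1 l2 : seq X) :
  size l1 = (J * B)%N -> size l2 = B -> within_at L B J.+1 (l1 ++ l2) ->
  within_at L B J l1 && (`|\sum_(x <- l2) c x| < 2 * L).
Proof.
move=> sl1 sl2; rewrite /within_at -addn1 iotaD all_cat add0n => /andP[hJ].
rewrite /= andbT => hlast.
have hl1 : within_at L B J l1.
  apply/allP => j jJ; have := allP hJ j jJ.
  rewrite psum_catl // sl1 leq_mul2r; move: jJ; rewrite mem_iota ltnS => /andP[_ ->]; exact: orbT.
apply/andP; split; first exact: hl1.
have S1 : `|\sum_(x <- l1) c x| < L.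
  by have := allP hl1 J; rewrite mem_iota ltnS leqnn -sl1 psum_size; apply.
move: hlast; rewrite mulSnr -sl1 -sl2 psum_cat psum_size.
move: S1; rewrite !ltr_norml => /andP[? ?] /andP[? ?].
by apply/andP; split; lra.
Qed.

Lemma prob_within_at_le (L : R) B J : 0 <= L ->
  16 * L ^+ 2 <= B%:R * q -> 1 <= B%:R * q ->
  expect_seq w (J * B) (fun l => (within_at L B J l)%:R) <= (7 / 8) ^+ J.
Proof.
move=> L_ge0 hL hs; elim: J => [|J IH]; first by rewrite /= expr0 lern1 leq_b1.
rewrite mulSnr expect_seq_cat.
apply: (@le_trans _ _ (expect_seq w (J * B) (fun l1 => 7 / 8 * (within_at L B J l1)%:R))).
  apply: (ler_expect_seq w_ge0) => l1 sl1.
  apply: (@le_trans _ _ (expect_seq w B (fun l2 =>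
     (within_at L B J l1)%:R * ((`|\sum_(x <- l2) c x| < 2 * L)%R)%:R))).
    apply: (ler_expect_seq w_ge0) => l2 sl2.
    case: (within_at L B J.+1 (l1 ++ l2)) (@within_atS L B J l1 l2 sl1 sl2).
      by move=> /(_ isT)/andP[-> ->]; rewrite mulr1.
    by rewrite mulr_ge0.
  by rewrite expect_seqZ mulrC ler_wpM2r ?ler0n ?prob_small_sum_le.
by rewrite expect_seqZ exprS ler_wpM2l.
Qed.

Definition exits_by (L : R) (T : nat) (l : seq X) : bool :=
  has (fun t => L <= `|psum c l t|) (iota 0 T.+1).

(* The square of the partial sum stopped when its modulus first reaches [L], the overshoot
   being replaced by [L^2]; in expectation it grows by at most [q] per step. *)
Let stopped_sqr (L : R) (T : nat) (l : seq X) : R :=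
  if has (fun t => L <= `|psum c l t|) (iota 0 T) then L ^+ 2 else psum c l T ^+ 2.

Let sqr_le_sqr_norm (L y : R) : 0 <= L -> L <= `|y| -> L ^+ 2 <= y ^+ 2.
Proof.
by move=> L_ge0 Ly; rewrite -(real_normK (num_real y)); nra.
Qed.

Lemma stopped_sqr_rcons (L : R) (l : seq X) : 0 <= L ->
  \sum_x w x * stopped_sqr L (size l).+1 (rcons l x) <= stopped_sqr L (size l) l + q.
Proof.
move=> L_ge0.
have psum_rcons x t : (t <= size l)%N -> psum c (rcons l x) t = psum c l t.
  by move=> tl; rewrite -cats1 psum_catl.
have psum_rcons_size x : psum c (rcons l x) (size l).+1 = psum c l (size l) + c x.
  by rewrite -cats1 -addn1 psum_cat psum_size /psum /= big_seq1.
have has_rcons x : has (fun t => L <= `|psum c (rcons l x) t|) (iota 0 (size l).+1)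
    = has (fun t => L <= `|psum c l t|) (iota 0 (size l)) || (L <= `|psum c l (size l)|).
  rewrite -addn1 iotaD has_cat /= orbF psum_rcons //; congr (_ || _).
  by apply: eq_in_has => t; rewrite mem_iota => /andP[_ tl]; rewrite psum_rcons // ltnW.
have sum_cst (y : R) : \sum_x w x * y = y by rewrite -mulr_suml w_sum1 mul1r.
rewrite /stopped_sqr; under eq_bigr => x _ do rewrite has_rcons psum_rcons_size.
case: (has _ (iota 0 (size l))) => /=; first by rewrite sum_cst lerDl.
case: (boolP (L <= `|psum c l (size l)|)) => /= [Lp|_]; last by rewrite sum_sqr_shift.
by rewrite sum_cst (le_trans (sqr_le_sqr_norm L_ge0 Lp)) ?lerDl.
Qed.

Lemma expect_stopped_sqr_le (L : R) T : 0 <= L ->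
  expect_seq w T (stopped_sqr L T) <= T%:R * q.
Proof.
move=> L_ge0; elim: T => [|T IH]; first by rewrite /= /stopped_sqr /= psum0 expr0n mul0r.
rewrite expect_seq_rcons.
apply: (@le_trans _ _ (expect_seq w T (fun l => stopped_sqr L T l + q))).
  by apply: (ler_expect_seq w_ge0) => l <-; apply: stopped_sqr_rcons.
by rewrite expect_seqD expect_seq_cst // -natr1 mulrDl mul1r lerD2r.
Qed.

Lemma kolmogorov_maximal (L : R) T : 0 <= L ->
  expect_seq w T (fun l => (exits_by L T l)%:R) * L ^+ 2 <= T%:R * q.
Proof.
move=> L_ge0; rewrite mulrC -expect_seqZ.
apply: le_trans (expect_stopped_sqr_le T L_ge0).
apply: (ler_expect_seq w_ge0) => l _.
rewrite /exits_by /stopped_sqr -[T.+1]addn1 iotaD has_cat /= orbF.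
case: (has _ (iota 0 T)) => /=; first by rewrite mulr1.
case: (boolP (L <= `|psum c l T|)) => /= [Lp|_]; last by rewrite mulr0 sqr_ge0.
by rewrite mulr1 sqr_le_sqr_norm.
Qed.

End CentredSums.

Lemma big_option (R : nmodType) (T : finType) (F : option T -> R) :
  \sum_(x : option T) F x = F None + \sum_(y : T) F (Some y).
Proof.
rewrite (bigD1 None) //=; congr (_ + _).
rewrite (reindex_omap (@Some T) id) => [|[]//].
by apply: eq_bigl => y; rewrite eqxx.
Qed.

Section LazyWalk.
Variables (R : realType) (d : nat).
Hypothesis d_gt0 : (0 < d)%N.

Definition step_coord (i : 'I_d) (x : step d) : R := (move x 0 i)%:~R.

Lemma big_step (F : step d -> R) :
  \sum_(x : step d) F x
  = F None + \sum_(i < d) (F (Some (i, true)) + F (Some (i, false))).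
Proof.
rewrite big_option; congr (_ + _).
rewrite (eq_bigr (fun p => F (Some (p.1, p.2)))); last by case.
rewrite -(pair_bigA _ (fun i b => F (Some (i, b)))) /=.
by under eq_bigr => i _ do rewrite big_bool.
Qed.

Lemma stepw_ge0 (x : step d) : 0 <= stepw R x.
Proof. by case: x => [?|] /=; rewrite invr_ge0 // ler0n. Qed.

Lemma sum_stepw : \sum_(x : step d) stepw R x = 1.
Proof.
rewrite big_step /= sumr_const card_ord -mulr_natr natrM.
have : (d%:R : R) != 0 by rewrite pnatr_eq0 -lt0n.
by move=> ?; field.
Qed.

Lemma step_coord_None i : step_coord i None = 0.
Proof. by rewrite /step_coord /= mxE. Qed.

Lemma step_coord_Some i j b :
  step_coord i (Some (j, b)) = if j == i then (if b then 1 else -1) else 0.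
Proof. by rewrite /step_coord /=; case: b; rewrite ?mxE /= eq_sym; case: eqP. Qed.

Lemma norm_step_coord_le1 i x : `|step_coord i x| <= 1.
Proof.
case: x => [[j b]|]; rewrite ?step_coord_None ?step_coord_Some ?normr0 //.
by case: eqP; case: b; rewrite ?normrN ?normr1 ?normr0.
Qed.

Lemma sum_stepw_step_coord i : \sum_(x : step d) stepw R x * step_coord i x = 0.
Proof.
rewrite big_step step_coord_None mulr0 add0r big1 // => j _.
by rewrite !step_coord_Some; case: eqP; rewrite ?mulr0 ?addr0 // mulrN mulr1 subrr.
Qed.

Lemma sum_stepw_step_coord_sqr i :
  \sum_(x : step d) stepw R x * step_coord i x ^+ 2 = (2 * d)%:R^-1.
Proof.
rewrite big_step step_coord_None expr0n mulr0 add0r.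
rewrite (eq_bigr (fun j => if j == i then (2 * d)%:R^-1 else 0)).
  by rewrite -big_mkcond big_pred1_eq.
move=> j _; rewrite !step_coord_Some /=; case: eqP => _; last by rewrite expr0n mulr0 addr0.
rewrite sqrrN expr1n !mulr1 natrM.
have : (d%:R : R) != 0 by rewrite pnatr_eq0 -lt0n.
by move=> ?; field.
Qed.

Lemma walk_prob_expect_seq T (E : pred {ffun 'I_T -> step d}) :
  walk_prob R E = expect_seq (@stepw R d) T (fun l => (E (ffun_of_seq None T l))%:R).
Proof. exact: sum_ffun_expect_seq. Qed.

Lemma walk_pos_step_coord T (l : seq (step d)) t i : size l = T ->
  (walk_pos (ffun_of_seq None T l) t 0 i)%:~R = psum (step_coord i) l t.
Proof.
move=> sl; rewrite /walk_pos /ffun_of_seq summxE rmorph_sum /psum (big_nth None) size_take sl.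
rewrite (eq_bigr (fun k : 'I_T => step_coord i (nth None l k))); last by move=> k _; rewrite ffunE.
rewrite -(big_mkord (fun k => k < t)%N (fun k => step_coord i (nth None l k))).
case: ltnP => tT.
  rewrite (big_nat_widen 0 t T) ?(ltnW tT) //.
  by apply: eq_big => // k /= kt; rewrite nth_take.
rewrite big_nat_cond [RHS]big_nat_cond; apply: eq_big => [k|k /andP[/andP[_ kT] _]].
  by apply/idP/idP => /andP[/andP[-> kT] kt]; rewrite ?kT ?kt ?(leq_trans kT tT).
by rewrite nth_take // (leq_trans kT tT).
Qed.

Lemma in_box_psum T (l : seq (step d)) t L : size l = T ->
  in_box L (walk_pos (ffun_of_seq None T l) t)
  = [forall i, `|psum (step_coord i) l t| < L%:R].
Proof.
move=> sl; apply: eq_forallb => i.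
rewrite -(walk_pos_step_coord _ _ sl) ltr_norml.
by rewrite -[L%:R]/((L%:Z)%:~R : R) -intrN !ltr_int.
Qed.

Lemma prob_exits_box_le T (L : R) : 0 <= L ->
  expect_seq (@stepw R d) T (fun l => [exists i, exits_by (step_coord i) L T l]%:R) * L ^+ 2
  <= T%:R / 2.
Proof.
move=> L_ge0.
have union_bound l : [exists i, exits_by (step_coord i) L T l]%:R
                     <= \sum_i (exits_by (step_coord i) L T l)%:R :> R.
  case: existsP => [[i hi]|_]; last exact: sumr_ge0.
  by rewrite (bigD1 i) //= hi lerDl sumr_ge0.
apply: (@le_trans _ _ (\sum_(i < d)
    expect_seq (@stepw R d) T (fun l => (exits_by (step_coord i) L T l)%:R) * L ^+ 2)).
  rewrite -mulr_suml -expect_seq_sum ler_wpM2r ?sqr_ge0 //.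
  by apply: (ler_expect_seq stepw_ge0) => l _; exact: union_bound.
apply: (@le_trans _ _ (\sum_(i < d) T%:R * (2 * d)%:R^-1)).
  apply: ler_sum => i _; rewrite -(sum_stepw_step_coord_sqr i).
  exact: (kolmogorov_maximal stepw_ge0 sum_stepw (sum_stepw_step_coord i)).
rewrite sumr_const card_ord -mulr_natr natrM.
have : (d%:R : R) != 0 by rewrite pnatr_eq0 -lt0n.
by move=> ?; rewrite le_eqVlt; apply/orP; left; apply/eqP; field.
Qed.

End LazyWalk.

Section ExitTime.
Variables (d n K L : nat) (s : {ffun 'I_(n * K.+1) -> step d}).

Lemma in_box_before_exit_time k : (k < @exit_time d n K L s)%N ->
  in_box L (walk_pos s (n * k)).
Proof.
move=> ke; have kK : (k < K.+1)%N.
  by rewrite -[K.+1](size_iota 0) (leq_trans ke) ?find_size.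
by have := before_find 0 ke; rewrite nth_iota // add0n => /negbFE.
Qed.

Lemma exit_time_outside : (@exit_time d n K L s <= K)%N ->
  ~~ in_box L (walk_pos s (n * @exit_time d n K L s)).
Proof.
move=> eK; have found : has (fun k => ~~ in_box L (walk_pos s (n * k))) (iota 0 K.+1).
  by rewrite has_find size_iota ltnS.
by have := nth_find 0 found; rewrite nth_iota ?ltnS // add0n.
Qed.

End ExitTime.

Section ExitTimeEvents.
Variables (R : realType) (d n K L : nat) (l : seq (step d)).
Hypothesis size_l : size l = (n * K.+1)%N.
Let e := @exit_time d n K L (ffun_of_seq None _ l).

Lemma exits_box_of_exit_time T0 : (e <= K)%N -> (n * e <= T0)%N ->
  [exists i, exits_by (step_coord R i) L%:R T0 (take T0 l)].
Proof.
move=> eK neT0; have := exit_time_outside eK.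
rewrite (in_box_psum R _ _ size_l) negb_forall => /existsP[i out_i].
apply/existsP; exists i; apply/hasP; exists (n * e)%N; first by rewrite mem_iota ltnS.
by rewrite psum_take // leNgt.
Qed.

Lemma within_at_of_exit_time b J (i : 'I_d) : (J * b < e)%N ->
  within_at (step_coord R i) L%:R (n * b) J (take (J * (n * b)) l).
Proof.
move=> Je; apply/allP => j; rewrite mem_iota ltnS => /andP[_ jJ].
rewrite psum_take ?leq_mul2r ?jJ ?orbT //.
have : in_box L (walk_pos (ffun_of_seq None (n * K.+1) l) (n * (j * b))).
  by apply: in_box_before_exit_time; apply: leq_ltn_trans Je; rewrite leq_mul2r jJ orbT.
by rewrite (in_box_psum R _ _ size_l) mulnCA => /forallP/(_ i).
Qed.

End ExitTimeEvents.

Definition inv_sqrt_lnln (R : realType) (x : R) : R := (Num.sqrt (ln (ln x)))^-1.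

Lemma inv_sqrt_lnln_ge0 (R : realType) (x : R) : 0 <= inv_sqrt_lnln x.
Proof. by rewrite invr_ge0 sqrtr_ge0. Qed.

Lemma main_event_le (R : realType) d n K L b J (eps lnN Nd : R) (i0 : 'I_d)
    (l : seq (step d)) :
  size l = (n * K.+1)%N -> (0 < n)%N -> 0 < Nd -> 0 <= eps ->
  eps * Nd < (K * n)%:R -> (J * (n * b))%:R <= Nd * lnN ->
  (((@exit_time d n K L (ffun_of_seq None _ l) * n)%:R / Nd < eps)
    || (lnN < (@exit_time d n K L (ffun_of_seq None _ l) * n)%:R / Nd))%R%:R <=
    [exists i, exits_by (step_coord R i) L%:R (Num.truncn (eps * Nd))
                                         (take (Num.truncn (eps * Nd)) l)]%:R
    + (within_at (step_coord R i0) L%:R (n * b) J (take (J * (n * b)) l))%:R :> R.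
Proof.
move=> sl n_gt0 Nd_gt0 eps_ge0 hK hJ.
set e := exit_time _ _; set x := (e * n)%:R / Nd.
case: (boolP (x < eps)) => /= [small|_].
  have en : (e * n)%:R < eps * Nd by rewrite -ltr_pdivrMr.
  rewrite (exits_box_of_exit_time R sl) ?lerDl //.
    by rewrite ltnW // -(ltn_pmul2r n_gt0) -(ltr_nat R) (lt_trans en hK).
  by rewrite truncn_ge_nat ?mulr_ge0 ?(ltW Nd_gt0) // mulnC ltW.
case: (boolP (lnN < x)) => /= [large|_]; last by rewrite addr_ge0.
rewrite (within_at_of_exit_time R sl) ?lerDr //.
rewrite -(ltn_pmul2r n_gt0) -(ltr_nat R) mulnC mulnCA (le_lt_trans hJ) //.
by rewrite mulrC -ltr_pdivlMr.
Qed.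

Lemma horizon_gt (R : realType) d (delta : R) N : (0 < nN delta N)%N ->
  (N%:R : R) ^+ d * (ln N%:R + inv_sqrt_lnln (nN delta N)%:R)
  < (horizon d delta N * nN delta N)%:R.
Proof. by move=> n_gt0; rewrite natrM -ltr_pdivrMr ?ltr0n // truncnS_gt. Qed.

Lemma main_prob_le (R : realType) d (delta : R) (m : nat -> nat) N b J :
  (0 < d)%N -> (0 < N)%N -> (0 < m N * N)%N -> (0 < nN delta N)%N ->
  (32 * d * (m N * N) ^ 2 <= nN delta N * b)%N ->
  (J * (nN delta N * b))%:R <= (N%:R : R) ^+ d * ln N%:R ->
  main_prob d delta m N <=
    inv_sqrt_lnln (nN delta N)%:R * N%:R ^+ d / (2 * (m N * N)%:R ^+ 2) + (7 / 8) ^+ J.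
Proof.
move=> d_gt0 N_gt0 L_gt0 n_gt0 hb hJ; have hK := horizon_gt d n_gt0.
rewrite /main_prob walk_prob_expect_seq.
set n := nN delta N in n_gt0 hb hJ hK *.
set K := horizon d delta N in hK *.
set L := (m N * N)%N in L_gt0 hb *.
set Nd := (N%:R : R) ^+ d in hJ hK *.
rewrite -/(inv_sqrt_lnln n%:R); set eps := inv_sqrt_lnln n%:R in hK *.
have Nd_gt0 : 0 < Nd by rewrite exprn_gt0 // ltr0n.
have eps_ge0 : 0 <= eps := inv_sqrt_lnln_ge0 _.
have lnN_ge0 : 0 <= ln (N%:R : R) by rewrite ln_ge0 // ler1n.
have epsNd : eps * Nd < (K * n)%:R.
  by apply: le_lt_trans hK; rewrite mulrC ler_wpM2l ?lerDr // ltW.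
set T0 := Num.truncn (eps * Nd).
have T0_le : T0%:R <= eps * Nd by rewrite truncn_le mulr_ge0 // ltW.
have Kn_le : (K * n <= n * K.+1)%N by rewrite mulnC leq_mul2l leqnSn orbT.
have T0_le_T : (T0 <= n * K.+1)%N.
  by apply: leq_trans Kn_le; rewrite -(ler_nat R) (le_trans T0_le) ?ltW.
have JB_le_T : (J * (n * b) <= n * K.+1)%N.
  apply: leq_trans Kn_le; rewrite -(ler_nat R) (le_trans hJ) // ltW //.
  by apply: le_lt_trans hK; rewrite ler_wpM2l ?lerDl // ltW.
apply: le_trans.
  apply: (ler_expect_seq (@stepw_ge0 R d)) => l sl.
  exact: (main_event_le L (Ordinal d_gt0) sl n_gt0 Nd_gt0 eps_ge0 epsNd hJ).
have w_sum1 := sum_stepw R d_gt0.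
rewrite expect_seqD.
rewrite (expect_seq_take w_sum1
  (fun l => [exists i, exits_by (step_coord R i) L%:R T0 l]%:R) T0_le_T).
rewrite (expect_seq_take w_sum1
  (fun l => (within_at (step_coord R (Ordinal d_gt0)) L%:R (n * b) J l)%:R) JB_le_T).
apply: lerD.
  have := prob_exits_box_le d_gt0 T0 (ler0n R L).
  rewrite -ler_pdivlMr ?exprn_gt0 ?ltr0n // => /le_trans; apply.
  rewrite [in X in _ <= X]invfM mulrA.
  by rewrite !ler_wpM2r ?invr_ge0 ?sqr_ge0.
have hb' : 32 * d%:R * L%:R ^+ 2 <= (n * b)%:R :> R by rewrite -natrX -!natrM ler_nat.
have L2_ge1 : 1 <= L%:R ^+ 2 :> R by rewrite exprn_ege1 // ler1n.
have d_ge0 := ler0n R d.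
apply: (prob_within_at_le (@stepw_ge0 R d) w_sum1
  (sum_stepw_step_coord R (Ordinal d_gt0)) (norm_step_coord_le1 R (Ordinal d_gt0))) => //;
  by rewrite sum_stepw_step_coord_sqr // ler_pdivlMr ?ltr0n ?muln_gt0 // (natrM _ 2 d); nra.
Qed.

Lemma leq_nN (R : realType) (delta : R) N : 1 <= delta -> (0 < N)%N -> (N <= nN delta N)%N.
Proof.
by move=> delta_ge1 N_gt0; rewrite truncn_ge_nat ?powR_ge0 // le1r_powR // ler1n.
Qed.

Lemma nN_le_expr (R : realType) (delta : R) d N : delta <= d%:R -> (0 < N)%N ->
  (nN delta N)%:R <= (N%:R : R) ^+ d.
Proof.
move=> delta_le N_gt0; apply: (@le_trans _ _ ((N%:R : R) `^ delta)).
  by rewrite truncn_le powR_ge0.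
by rewrite -powR_mulrn ?ler0n // ler_powR // ler1n.
Qed.

Lemma main_prob_le_geometric (R : realType) d (delta A : R) (m : nat -> nat) N :
  (0 < d)%N -> 0 < A -> 1 <= delta -> delta <= d%:R -> (0 < N)%N ->
  `|A - (m N * N)%:R ^+ 2 / N%:R ^+ d| < A / 2 ->
  main_prob d delta m N <= inv_sqrt_lnln (nN delta N)%:R / A
    + (7 / 8) ^+ Num.truncn (ln N%:R / (48 * d%:R * A + 1)).
Proof.
move=> d_gt0 A_gt0 delta_ge1 delta_le N_gt0 hL.
have n_le := nN_le_expr delta_le N_gt0.
have n_gt0 : (0 < nN delta N)%N by apply: leq_trans (leq_nN delta_ge1 N_gt0).
set n := nN delta N in n_le n_gt0 *; set L := (m N * N)%N in hL *.
set Nd := (N%:R : R) ^+ d in hL n_le *; set C := 48 * d%:R * A + 1.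
have Nd_gt0 : 0 < Nd by rewrite exprn_gt0 // ltr0n.
have [L2_lo L2_hi] : A / 2 * Nd < L%:R ^+ 2 /\ L%:R ^+ 2 < 3 * A / 2 * Nd.
  move: hL; rewrite ltr_norml => /andP[h1 h2].
  by split; [rewrite -ltr_pdivlMr | rewrite -ltr_pdivrMr]; lra.
have L_gt0 : (0 < L)%N.
  rewrite lt0n; apply/negP => /eqP L0; move: L2_lo; rewrite L0 expr0n /=.
  have : 0 < A / 2 * Nd by rewrite mulr_gt0 ?divr_gt0.
  lra.
set b := ((32 * d * L ^ 2) %/ n).+1.
have hb : (32 * d * L ^ 2 <= n * b)%N by rewrite [(n * b)%N]mulnC ltnW // ltn_ceil.
have nb_le : (n * b)%:R <= C * Nd.
  have : (n * b)%:R <= 32 * d%:R * L%:R ^+ 2 + n%:R :> R.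
    rewrite -natrX -!natrM -natrD ler_nat.
    by rewrite /b mulnS addnC leq_add2r mulnC leq_trunc_div.
  have : d%:R * L%:R ^+ 2 <= d%:R * (3 * A / 2 * Nd) :> R.
    by apply: ler_wpM2l; [exact: ler0n | exact: ltW].
  rewrite /C; lra.
have lnN_ge0 : 0 <= ln (N%:R : R) by rewrite ln_ge0 // ler1n.
have C_gt0 : 0 < C by rewrite /C; have := ler0n R d; nra.
set J := Num.truncn (ln N%:R / C).
have hJ : (J * (n * b))%:R <= Nd * ln N%:R.
  have J_le : J%:R <= ln N%:R / C by rewrite truncn_le divr_ge0 // ltW.
  rewrite natrM; apply: le_trans (ler_pM (ler0n _ _) (ler0n _ _) J_le nb_le) _.
  by rewrite mulrA divfK ?gt_eqF // mulrC.
apply: le_trans (main_prob_le d_gt0 N_gt0 L_gt0 n_gt0 hb hJ) _.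
have eps_ge0 := inv_sqrt_lnln_ge0 (n%:R : R).
rewrite lerD2r -/n ler_pdivrMr ?mulr_gt0 ?exprn_gt0 ?ltr0n //.
rewrite -mulrA ler_wpM2l // mulrC ler_pdivlMr // -/Nd -/L; lra.
Qed.

Lemma walk_prob_ge0 (R : realType) d T (E : pred {ffun 'I_T -> step d}) :
  0 <= walk_prob R E.
Proof.
apply: sumr_ge0 => s _; rewrite mulr_ge0 ?ler0n //.
by apply: prodr_ge0 => k _; apply: stepw_ge0.
Qed.

Lemma le_ln_of_expR_le (R : realType) (y x : R) : expR y <= x -> y <= ln x.
Proof.
move=> h; have x_gt0 : 0 < x by apply: lt_le_trans h; apply: expR_gt0.
by rewrite -[y]expRK ler_ln ?posrE ?expR_gt0.
Qed.

Lemma inv_sqrt_lnln_le (R : realType) (e x : R) : 0 < e ->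
  expR (expR (e ^- 2)) <= x -> inv_sqrt_lnln x <= e.
Proof.
move=> e_gt0 hx.
have lnln_ge : e ^- 2 <= ln (ln x) by do 2 apply: le_ln_of_expR_le.
have einv_gt0 : 0 < e^-1 by rewrite invr_gt0.
have sqrt_ge : e^-1 <= Num.sqrt (ln (ln x)).
  rewrite -(ger0_norm (ltW einv_gt0)) -sqrtr_sqr ler_sqrt ?exprVn //.
  by apply: le_trans lnln_ge; rewrite invr_ge0 exprn_ge0 ?ltW.
rewrite /inv_sqrt_lnln -[e]invrK lef_pV2 ?posrE //.
exact: lt_le_trans einv_gt0 sqrt_ge.
Qed.

Local Open Scope classical_set_scope.

Lemma near_inv_sqrt_lnln_nN_le (R : realType) (delta e : R) : 1 <= delta -> 0 < e ->
  \forall N \near \oo, inv_sqrt_lnln (nN delta N)%:R <= e.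
Proof.
move=> delta_ge1 e_gt0; near=> N.
have N_gt0 : (0 < N)%N by near: N; exact: nbhs_infty_gt.
apply: inv_sqrt_lnln_le => //; apply: (@le_trans _ _ N%:R); last by rewrite ler_nat leq_nN.
by near: N; exact: nbhs_infty_ger.
Unshelve. all: end_near.
Qed.

Lemma near_geometric_lnN_lt (R : realType) (C e : R) : 0 < C -> 0 < e ->
  \forall N \near \oo, (7 / 8 : R) ^+ Num.truncn (ln (N%:R : R) / C) < e.
Proof.
move=> C_gt0 e_gt0.
have : `|7 / 8 : R| < 1 by rewrite ger0_norm; lra.
move=> /cvg_expr/cvgrPdist_lt/(_ _ e_gt0) [J0 _ /(_ J0 (leqnn _))].
rewrite sub0r normrN ger0_norm ?exprn_ge0 // => geom_J0; near=> N.
have N_gt0 : (0 < N)%N by near: N; exact: nbhs_infty_gt.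
apply: le_lt_trans geom_J0; apply: ler_wiXn2l; [lra | lra |].
rewrite truncn_ge_nat; last by rewrite divr_ge0 ?ln_ge0 ?ler1n ?(ltW C_gt0).
rewrite ler_pdivlMr // mulrC; apply: le_ln_of_expR_le.
by near: N; exact: nbhs_infty_ger.
Unshelve. all: end_near.
Qed.

Theorem mainTheorem4 (R : realType) (d : nat) (hd : (3 <= d)%N)
  (m : nat -> nat) (A : R) (hA : 0 < A)
  (hL : (fun N : nat => ((m N * N)%:R : R) ^+ 2 / (N%:R : R) ^+ d) @ \oo --> A)
  (delta : R) (hdelta2 : 2 < delta) (hdeltad : delta < d%:R) :
  (fun N : nat => main_prob d delta m N) @ \oo --> (0 : R).
Proof.
have d_gt0 : (0 < d)%N by apply: leq_trans hd.
have delta_ge1 : 1 <= delta by apply: ltW; apply: lt_trans hdelta2; rewrite ltr1n.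
have C_gt0 : 0 < 48 * d%:R * A + 1 by have := ler0n R d; nra.
have A2_gt0 : 0 < A / 2 by rewrite divr_gt0.
move/cvgrPdist_lt: hL => /(_ _ A2_gt0) hLA.
apply/cvgrPdist_lt => e e_gt0; have e2_gt0 : 0 < e / 2 by rewrite divr_gt0.
near=> N.
have N_gt0 : (0 < N)%N by near: N; exact: nbhs_infty_gt.
rewrite sub0r normrN ger0_norm ?walk_prob_ge0 //.
apply: le_lt_trans (main_prob_le_geometric d_gt0 hA delta_ge1 (ltW hdeltad) N_gt0 _) _.
  by near: N.
rewrite [e]splitr; apply: ler_ltD.
  rewrite ler_pdivrMr //; near: N; apply: near_inv_sqrt_lnln_nN_le => //.
  by rewrite mulr_gt0.
by near: N; exact: near_geometric_lnN_lt.
Unshelve. all: end_near.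
Qed.
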